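(* Let $G$ be a finite abelian group and let $\rho\ge 2$ be an integer. Then $$s_\rho(G)=\max\{|H|\cdot t_\rho(G/H): H \text{ a proper subgroup of } G\}.$$
   Context: Groups are written additively. For $A\subseteq G$ let $A_0:=A\cup\{0\}$ and $\langle A\rangle^+_\rho:=\rho A_0=\{a_1+\dots+a_\rho:a_i\in A_0\}$. $\operatorname{diam}^+_A(G):=\min\{\rho\in\mathbb{N}_0:\langle A\rangle^+_\rho=G\}$ ($\min\varnothing=\infty$); $\operatorname{diam}^+(G):=\max\{\operatorname{diam}^+_A(G):\langle A\rangle=G\}$. The period of $S\subseteq G$ is $\pi(S):=\{g\in G:S+g=S\}$; $S$ is aperiodic if $\pi(S)=\{0\}$ and periodic otherwise. A subset $A\subseteq G$ is $\rho$-maximal if it is maximal under inclusion subject to $\operatorname{diam}^+_A(G)\ge\rho$, i.e. subject to $\langle A\rangle^+_{\rho-1}\neq G$. With the convention $\max\varnothing=0$: $s_\rho(G):=\max\{|A|: A\subseteq G,\ \rho\le\operatorname{diam}^+_A(G)<\infty\}$ and $t_\rho(G):=\max\{|A|: A \text{ is an aperiodic } \rho\text{-maximal generating set for } G\}$. *)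

(* finite groups (abelian groups written multiplicatively). *)
From Stdlib Require Import ClassicalEpsilon.
From mathcomp Require Import all_boot all_fingroup.
Set Implicit Arguments. Unset Strict Implicit. Unset Printing Implicit Defensive.
Local Open Scope group_scope.

Definition classb (P : Prop) : bool :=
  if excluded_middle_informative P then true else false.

Section Defs.
Variable gT : finGroupType.
Implicit Types (G A B S : {set gT}).

(* A_0 := A ∪ {0} (here 0 is the unit 1 of the group) *)
Definition A0 A : {set gT} := 1 |: A.

(* <A>^+_k := k A_0, with 0 A_0 = {0} *)
Definition sumset (k : nat) A : {set gT} := iter k (fun S => S * A0 A) [set 1].

(* rho <= diam^+_A(G)  (min over the empty set is infinity) *)
Definition diam_geq G A (rho : nat) : Prop :=
  forall k, sumset k A = G -> rho <= k.

Definition diam_finite G A : Prop := exists k, sumset k A = G.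

Definition period G S : {set gT} := [set g in G | S :* g == S].

Definition aperiodic G S : Prop := period G S = [set 1].

Definition rho_maximal G A (rho : nat) : Prop :=
  [/\ A \subset G, diam_geq G A rho &
      forall B, A \proper B -> B \subset G -> ~ diam_geq G B rho].

Definition s_rho G (rho : nat) : nat :=
  \max_(A : {set gT} | (A \subset G) && classb (diam_geq G A rho /\ diam_finite G A)) #|A|.

Definition t_rho G (rho : nat) : nat :=
  \max_(A : {set gT} | (A \subset G) &&
          classb [/\ rho_maximal G A rho, <<A>> = G & aperiodic G A]) #|A|.
End Defs.

(* A set A of diameter at least rho with finite diameter can be enlarged to a
   rho-maximal one.  A rho-maximal set A is a union of cosets of its period H,
   and it is proper in G because rho >= 2, so H is a proper subgroup; the
   image A/H is then an aperiodic rho-maximal generating set of G/H, and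
   |A| = |H| |A/H|.  Conversely the preimage of an aperiodic rho-maximal
   generating set of G/H has |H| times as many elements and the same
   diameter, which gives the reverse inequality. *)
From mathcomp Require Import all_boot all_fingroup.
From Stdlib Require Import Classical ClassicalEpsilon.
Set Implicit Arguments. Unset Strict Implicit. Unset Printing Implicit Defensive.
Local Open Scope group_scope.

Lemma classbE (P : Prop) : classb P = true <-> P.
Proof. by rewrite /classb; case: excluded_middle_informative. Qed.

Section Sumset.
Variable gT : finGroupType.
Implicit Types (A B S : {set gT}) (G : {group gT}).

Lemma sumsetSn k A : sumset k.+1 A = sumset k A * A0 A.
Proof. by []. Qed.

Lemma A0_1 A : 1 \in A0 A.
Proof. exact: setU11. Qed.

Lemma A0_id A : 1 \in A -> A0 A = A.
Proof. by move=> A1; apply/setUidPr; rewrite sub1set. Qed.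

Lemma sumset_A0 k A : sumset k (A0 A) = sumset k A.
Proof. by rewrite /sumset /A0 setUA setUid. Qed.

Lemma one_sumset k A : 1 \in sumset k A.
Proof.
elim: k => [|k IH]; first exact: set11.
by rewrite sumsetSn -[1]mulg1 mem_mulg ?A0_1.
Qed.

Lemma sumset_subnS k A : sumset k A \subset sumset k.+1 A.
Proof.
by apply/subsetP => x Sx; rewrite sumsetSn -[x]mulg1 mem_mulg ?A0_1.
Qed.

Lemma sumset_sub k A G : A \subset G -> sumset k A \subset G.
Proof.
move=> AG; elim: k => [|k IH]; first by rewrite sub1set group1.
by rewrite sumsetSn -(mulGid G) mulgSS // subUset sub1set group1.
Qed.

Lemma sumset_gen k A : sumset k A \subset <<A>>.
Proof. exact/sumset_sub/subset_gen. Qed.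

Lemma sumset_fullSn k A G : A \subset G -> sumset k A = G -> sumset k.+1 A = G.
Proof.
move=> AG SG; apply/eqP; rewrite eqEsubset sumset_sub //=.
by rewrite -{1}SG sumset_subnS.
Qed.

Lemma group_set_period G S : group_set (period G S).
Proof.
apply/group_setP; split; first by rewrite inE group1 rcoset1 eqxx.
move=> x y; rewrite !inE => /andP[Gx /eqP Sx] /andP[Gy /eqP Sy].
by rewrite groupM // rcosetM Sx Sy eqxx.
Qed.

Canonical period_group G S := group (group_set_period G S).

Lemma period_sub G S : period G S \subset G.
Proof. by apply/subsetP => g; rewrite inE => /andP[]. Qed.

Lemma rcoset_period G S g : g \in period G S -> S :* g = S.
Proof. by rewrite inE => /andP[_ /eqP]. Qed.

Lemma mulg_period G S : S * period G S = S.
Proof.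
apply/eqP; rewrite eqEsubset; apply/andP; split.
  apply/subsetP => _ /mulsgP[s h Ss Ph ->].
  by rewrite -(rcoset_period Ph) mem_mulg ?set11.
by apply/subsetP => s Ss; rewrite -[s]mulg1 mem_mulg ?group1.
Qed.

Lemma period_sub_set G S B : 1 \in S -> B \subset period G S -> B \subset S.
Proof.
move=> S1 BP; apply/subsetP => g Bg.
by have := mem_mulg S1 (set11 g); rewrite mul1g (rcoset_period (subsetP BP g Bg)).
Qed.

(* Once the sumsets stop growing, the last one is stable under translation by
   every element of A, hence by the whole group <<A>>, and it contains 1. *)
Lemma sumset_stable k A : sumset k.+1 A \subset sumset k A -> sumset k A = <<A>>.
Proof.
move=> stable; set S := sumset k A.
have A_period : A \subset period [set: gT] S.
  apply/subsetP => a Aa; rewrite !inE eqEcard card_rcoset leqnn andbT.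
  apply: subset_trans stable; rewrite sumsetSn mulgS // sub1set.
  by rewrite inE Aa orbT.
apply/eqP; rewrite eqEsubset sumset_gen /=.
by apply: (period_sub_set (G := [set: gT]%G) (one_sumset k A)); rewrite gen_subG.
Qed.

Lemma sumset_eventually_gen A : exists k, sumset k A = <<A>>.
Proof.
suff [k stable] : exists k, sumset k.+1 A \subset sumset k A.
  by exists k; apply: sumset_stable.
apply: NNPP => no_stable.
have growth j : j <= #|sumset j A|.
  elim: j => // j IH; apply: leq_trans (proper_card _); first exact: IH.
  rewrite properE sumset_subnS; apply/negP => stable.
  by apply: no_stable; exists j.
by have := growth #|gT|.+1; rewrite ltnNge max_card.
Qed.

Lemma diam_finiteP G A : A \subset G -> diam_finite G A <-> <<A>> = G.
Proof.
move=> AG; split=> [[k SG] | genA].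
  by apply/eqP; rewrite eqEsubset gen_subG AG -{1}SG sumset_gen.
by have [k Sk] := sumset_eventually_gen A; exists k; rewrite Sk.
Qed.

Lemma diam_finiteS G A B :
  A \subset B -> B \subset G -> diam_finite G A -> diam_finite G B.
Proof.
move=> AB BG /(diam_finiteP (subset_trans AB BG)) genA.
apply/diam_finiteP => //; apply/eqP; rewrite eqEsubset gen_subG BG /=.
by rewrite -{1}genA genS.
Qed.

Lemma rho_maximal_sub G A rho : rho_maximal G A rho -> A \subset G.
Proof. by case. Qed.

Lemma rho_maximal1 G A rho : rho_maximal G A rho -> 1 \in A.
Proof.
case=> AG dA maxA; apply/negPn/negP => A1; apply: (maxA (A0 A)).
- by rewrite properE subsetUr; apply: contra A1 => /subsetP; apply; apply: A0_1.
- by rewrite subUset sub1set group1 AG.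
- by move=> k; rewrite sumset_A0; apply: dA.
Qed.

Lemma rho_maximal_proper G A rho :
  2 <= rho -> rho_maximal G A rho -> ~~ (G \subset A).
Proof.
move=> rho2 Amax; apply/negP => GA; have A1 := rho_maximal1 Amax.
case: Amax => AG dA _; have AeqG : A = G by apply/eqP; rewrite eqEsubset AG.
have: rho <= 1 by apply: dA; rewrite /sumset /= mul1g A0_id.
by rewrite leqNgt rho2.
Qed.

Lemma rho_maximal_extension G A rho :
    A \subset G -> diam_geq G A rho ->
  exists2 M : {set gT}, A \subset M & rho_maximal G M rho.
Proof.
move=> AG dA.
pose P := [pred B : {set gT} | (B \subset G) && classb (diam_geq G B rho)].
have [M /maxsetP[/andP[MG /classbE dM] maxM] AM] : {M | maxset P M & A \subset M}.
  by apply: maxset_exists; rewrite /= AG; apply/classbE.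
exists M => //; split=> // B ltMB BG dB.
have eqBM : B = M by apply: maxM (proper_sub ltMB); rewrite /= BG; apply/classbE.
by move: ltMB; rewrite eqBM properxx.
Qed.
End Sumset.

Section Quotient.
Variables (gT : finGroupType) (H : {group gT}).
Implicit Types (G : {group gT}) (X : {set gT}) (C : {set coset_of H}).

Lemma card_cosetpre_set C : #|coset H @*^-1 C| = (#|H| * #|C|)%N.
Proof.
rewrite -sum1_card (partition_big (coset H) (mem C)) => [|x /morphpreP[] //].
rewrite mulnC -sum_nat_const; apply: eq_bigr => c Cc.
have -> : \sum_(x in coset H @*^-1 C | coset H x == c) 1 = #|coset H @*^-1 [set c]|.
  rewrite sum1_card; apply: eq_card => x; rewrite unfold_in /=.
  apply/andP/morphpreP => [[/morphpreP[Nx _] /eqP <-] | [Nx /set1P xc]].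
    by split; rewrite ?set11.
  by split; [rewrite mem_morphpre // xc | apply/eqP].
by case: (cosetP c) => x Nx ->; rewrite cosetpre_set1 // card_rcoset.
Qed.

Lemma sumset_quotient k X : X \subset 'N(H) -> sumset k X / H = sumset k (X / H).
Proof.
move=> nHX; elim: k => [|k IH]; first exact: quotient1.
rewrite !sumsetSn quotientMr ?subUset ?sub1set ?group1 //.
by rewrite IH quotientU quotient1.
Qed.

Lemma sumset_cosetpre k C :
  1 \in C -> sumset k.+1 (coset H @*^-1 C) = coset H @*^-1 (sumset k.+1 C).
Proof.
move=> C1; have preC1 : 1 \in coset H @*^-1 C by rewrite mem_morphpre ?morph1.
elim: k => [|k IH]; first by rewrite /sumset /= !mul1g !A0_id.
by rewrite (sumsetSn k.+1 C) sumsetSn IH !A0_id // [RHS]cosetpreM.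
Qed.

Lemma sumset_cosetpreK k C : sumset k (coset H @*^-1 C) / H = sumset k C.
Proof. by rewrite sumset_quotient ?morphpre_sub // cosetpreK. Qed.

Section Normal.
Variables (G : {group gT}) (rho : nat).
Hypothesis nsHG : H <| G.

Lemma diam_geq_cosetpre C :
    1 \in C -> ~~ (G \subset H) ->
  diam_geq G (coset H @*^-1 C) rho <-> diam_geq (G / H) C rho.
Proof.
move=> C1 not_GH; split=> dC k SG; last by apply: dC; rewrite -sumset_cosetpreK SG.
case: k SG => [|k] SG.
  by move: not_GH; rewrite -(quotient_sub1 (normal_norm nsHG)) -SG subxx.
by apply: dC; rewrite sumset_cosetpre // SG quotientGK.
Qed.

Lemma diam_finite_cosetpre C :
    1 \in C -> C \subset G / H ->
  diam_finite G (coset H @*^-1 C) <-> diam_finite (G / H) C.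
Proof.
move=> C1 CG; split=> [[k SG] | [k SG]].
  by exists k; rewrite -sumset_cosetpreK SG.
by exists k.+1; rewrite sumset_cosetpre // (sumset_fullSn CG SG) quotientGK.
Qed.

Lemma rho_maximal_cosetpre C :
    1 \in C -> ~~ (G \subset H) ->
  rho_maximal G (coset H @*^-1 C) rho -> rho_maximal (G / H) C rho.
Proof.
move=> C1 not_GH [CG dC maxC]; have GK := quotientGK nsHG.
split; first by rewrite -cosetpreSK GK.
  by rewrite -diam_geq_cosetpre.
move=> D ltCD DG dD; apply: (maxC (coset H @*^-1 D)).
- by rewrite cosetpre_proper.
- by rewrite -GK cosetpreSK.
- by rewrite diam_geq_cosetpre // (subsetP (proper_sub ltCD)).
Qed.
End Normal.
End Quotient.

Section PeriodQuotient.
Variables (gT : finGroupType) (G : {group gT}) (A : {set gT}).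
Let P := period G A.
Hypotheses (nPG : G \subset 'N(P)) (AG : A \subset G).

Lemma quotient_periodK : coset P @*^-1 (A / P) = A.
Proof.
have nPA := subset_trans AG nPG.
by rewrite quotientK // -(normC nPA) mulg_period.
Qed.

Lemma aperiodic_quotient_period : aperiodic (G / P) (A / P).
Proof.
apply/setP => c; rewrite !inE; apply/andP/eqP => [[Gc /eqP AcA] | ->].
  case/morphimP: Gc AcA => g Ng Gg -> AgA.
  have: A :* g = A.
    have := congr1 (fun X => coset P @*^-1 X) AgA.
    by rewrite cosetpreM quotient_periodK cosetpre_set1 // mulgA mulg_period.
  by move=> Ag; apply: coset_id; rewrite inE Gg Ag eqxx.
by rewrite group1 rcoset1.
Qed.
End PeriodQuotient.

Section SRho.
Variables (gT : finGroupType) (G : {group gT}) (rho : nat).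
Hypothesis abG : abelian G.

Lemma rho_maximal_quotient_period (A : {set gT}) :
    2 <= rho -> rho_maximal G A rho -> diam_finite G A ->
  [/\ period G A \proper G, #|A| = (#|period G A| * #|A / period G A|)%N
    & [/\ rho_maximal (G / period G A) (A / period G A) rho,
          <<A / period G A>> = G / period G A
        & aperiodic (G / period G A) (A / period G A)]].
Proof.
move=> rho2 Amax fA; set P := period G A.
have AG := rho_maximal_sub Amax; have A1 := rho_maximal1 Amax.
have nsPG : P <| G by rewrite -sub_abelian_normal ?period_sub.
have nPG := normal_norm nsPG; have PK := quotient_periodK nPG AG.
have not_GP : ~~ (G \subset P).
  by apply: contra (rho_maximal_proper rho2 Amax); apply: period_sub_set.
have AP1 : 1 \in A / P by apply/morphimP; exists 1; rewrite ?group1 ?morph1.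
have APG : A / P \subset G / P by rewrite quotientS.
split; first by rewrite properE period_sub.
  by rewrite -card_cosetpre_set PK.
split; last exact: aperiodic_quotient_period.
- by apply: rho_maximal_cosetpre; rewrite ?PK.
- by apply/(diam_finiteP APG); rewrite -diam_finite_cosetpre ?PK.
Qed.

Lemma card_le_max_quotient (A : {set gT}) :
    2 <= rho -> A \subset G -> diam_geq G A rho -> diam_finite G A ->
  #|A| <= \max_(H : {group gT} | H \proper G) (#|H| * t_rho (G / H) rho)%N.
Proof.
move=> rho2 AG dA fA; have [M AM Mmax] := rho_maximal_extension AG dA.
have fM := diam_finiteS AM (rho_maximal_sub Mmax) fA.
have [ltPG cardM tM] := rho_maximal_quotient_period rho2 Mmax fM.
apply: leq_trans (subset_leq_card AM) _; rewrite cardM.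
apply: leq_trans (leq_bigmax_cond (period_group G M) ltPG).
rewrite leq_mul2l; apply/orP; right; apply: leq_bigmax_cond.
by rewrite quotientS ?(rho_maximal_sub Mmax) //; apply/classbE.
Qed.

Lemma card_cosetpre_le_s_rho (H : {group gT}) B :
    H \proper G -> rho_maximal (G / H) B rho -> <<B>> = G / H ->
  (#|H| * #|B| <= s_rho G rho)%N.
Proof.
move=> ltHG Bmax genB.
have BG := rho_maximal_sub Bmax; have B1 := rho_maximal1 Bmax.
have nsHG : H <| G by rewrite -sub_abelian_normal ?proper_sub.
have not_GH : ~~ (G \subset H) by move: ltHG; rewrite properE => /andP[].
have preBG : coset H @*^-1 B \subset G by rewrite -(quotientGK nsHG) cosetpreSK.
rewrite -card_cosetpre_set; apply: leq_bigmax_cond.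
rewrite preBG; apply/classbE; split.
  by rewrite diam_geq_cosetpre //; case: Bmax.
by rewrite diam_finite_cosetpre // diam_finiteP.
Qed.
End SRho.

Theorem lemma2p3 (gT : finGroupType) (G : {group gT}) (rho : nat) :
  abelian G -> 2 <= rho ->
  s_rho G rho = \max_(H : {group gT} | H \proper G) (#|H| * t_rho (G / H) rho)%N.
Proof.
move=> abG rho2; apply/eqP; rewrite eqn_leq; apply/andP; split.
  apply/bigmax_leqP => A /andP[AG /classbE[dA fA]].
  exact: card_le_max_quotient.
apply/bigmax_leqP => H ltHG; rewrite big_distrr.
apply/bigmax_leqP => B /andP[_ /classbE[Bmax genB _]].
exact: card_cosetpre_le_s_rho.
Qed.
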